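(* Let $\underline\phi\le\overline\phi$ and $\underline\chi\le\overline\chi$ be functions $[0,1]\to[0,1]$ satisfying (F1)–(F3). Then the pair $(C^{\mathrm{MM}}_{\underline\phi,\overline\chi},C^{\mathrm{MM}}_{\overline\phi,\underline\chi})$ is an imprecise copula which is coherent, i.e. with $\mathcal C=\{C: C \text{ a copula}, C^{\mathrm{MM}}_{\underline\phi,\overline\chi}\le C\le C^{\mathrm{MM}}_{\overline\phi,\underline\chi}\}$ one has $C^{\mathrm{MM}}_{\underline\phi,\overline\chi}=\inf_{C\in\mathcal C}C$ and $C^{\mathrm{MM}}_{\overline\phi,\underline\chi}=\sup_{C\in\mathcal C}C$ pointwise.
   Context: (F1) $\phi(0)=\chi(0)=0$, $\phi(1)=\chi(1)=1$; (F2) $\phi,\chi$ non-decreasing; (F3) $\phi(u)/u$ on $(0,1]$ and $\frac{1-\chi(w)}{w-\chi(w)}$ on $[0,1]$ (values in $[1,\infty]$) non-increasing. $C^{\mathrm{MM}}_{\phi,\chi}(u,w)=uw+\min\{u(1-w),(\phi(u)-u)(w-\chi(w))\}$. A copula is $C:[0,1]^2\to[0,1]$ with $C(u,0)=C(0,v)=0$, $C(u,1)=u$, $C(1,v)=v$, and $C(u_2,v_2)-C(u_1,v_2)-C(u_2,v_1)+C(u_1,v_1)\ge0$ for $u_1\le u_2$, $v_1\le v_2$. An imprecise copula is a pair $(\underline C,\overline C)$ of maps $[0,1]^2\to[0,1]$ both satisfying the boundary conditions of a copula and, for all $u_1\le u_2$, $v_1\le v_2$: $\underline C(u_2,v_2)+\overline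 C(u_1,v_1)-\underline C(u_2,v_1)-\underline C(u_1,v_2)\ge0$; $\overline C(u_2,v_2)+\underline C(u_1,v_1)-\underline C(u_2,v_1)-\underline C(u_1,v_2)\ge0$; $\overline C(u_2,v_2)+\overline C(u_1,v_1)-\overline C(u_2,v_1)-\underline C(u_1,v_2)\ge0$; $\overline C(u_2,v_2)+\overline C(u_1,v_1)-\underline C(u_2,v_1)-\overline C(u_1,v_2)\ge0$. *)

From Stdlib Require Import Reals.
From Coquelicot Require Import Rbar.
Open Scope R_scope.

Definition in01 (x : R) : Prop := 0 <= x <= 1.

Definition maps01 (f : R -> R) : Prop := forall x, in01 x -> in01 (f x).

Definition F1 (phi chi : R -> R) : Prop :=
  phi 0 = 0 /\ chi 0 = 0 /\ phi 1 = 1 /\ chi 1 = 1.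

Definition F2 (phi chi : R -> R) : Prop :=
  (forall x y, in01 x -> in01 y -> x <= y -> phi x <= phi y) /\
  (forall x y, in01 x -> in01 y -> x <= y -> chi x <= chi y).

(* the [1,+oo]-valued quotient (1 - chi w)/(w - chi w); value +oo when the
   denominator vanishes *)
Definition chi_ratio (chi : R -> R) (w : R) : Rbar :=
  if Req_EM_T (w - chi w) 0 then p_infty
  else Finite ((1 - chi w) / (w - chi w)).

(* (F3): phi(u)/u non-increasing on (0,1]; the chi-quotient takes values in
   [1,+oo] and is non-increasing (on [0,1), the point w = 1 giving 0/0) *)
Definition F3 (phi chi : R -> R) : Prop :=
  (forall x y, 0 < x -> x <= y -> y <= 1 -> phi y / y <= phi x / x) /\
  (forall w, 0 <= w < 1 -> Rbar_le (Finite 1) (chi_ratio chi w)) /\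
  (forall x y, 0 <= x -> x <= y -> y < 1 ->
     Rbar_le (chi_ratio chi y) (chi_ratio chi x)).

Definition admissible (phi chi : R -> R) : Prop :=
  maps01 phi /\ maps01 chi /\ F1 phi chi /\ F2 phi chi /\ F3 phi chi.

Definition CMM (phi chi : R -> R) (u w : R) : R :=
  u * w + Rmin (u * (1 - w)) ((phi u - u) * (w - chi w)).

Definition copula_boundary (C : R -> R -> R) : Prop :=
  (forall u v, in01 u -> in01 v -> in01 (C u v)) /\
  (forall u, in01 u -> C u 0 = 0 /\ C 0 u = 0 /\ C u 1 = u /\ C 1 u = u).

Definition is_copula (C : R -> R -> R) : Prop :=
  copula_boundary C /\
  (forall u1 u2 v1 v2, in01 u1 -> in01 u2 -> in01 v1 -> in01 v2 ->
     u1 <= u2 -> v1 <= v2 ->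
     C u2 v2 - C u1 v2 - C u2 v1 + C u1 v1 >= 0).

Definition is_imprecise_copula (Cl Cu : R -> R -> R) : Prop :=
  copula_boundary Cl /\ copula_boundary Cu /\
  (forall u1 u2 v1 v2, in01 u1 -> in01 u2 -> in01 v1 -> in01 v2 ->
     u1 <= u2 -> v1 <= v2 ->
     Cl u2 v2 + Cu u1 v1 - Cl u2 v1 - Cl u1 v2 >= 0 /\
     Cu u2 v2 + Cl u1 v1 - Cl u2 v1 - Cl u1 v2 >= 0 /\
     Cu u2 v2 + Cu u1 v1 - Cu u2 v1 - Cl u1 v2 >= 0 /\
     Cu u2 v2 + Cu u1 v1 - Cl u2 v1 - Cu u1 v2 >= 0).

Definition is_inf (S : R -> Prop) (m : R) : Prop :=
  (forall y, S y -> m <= y) /\ (forall b, (forall y, S y -> b <= y) -> b <= m).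
Definition is_sup (S : R -> Prop) (m : R) : Prop :=
  (forall y, S y -> y <= m) /\ (forall b, (forall y, S y -> y <= b) -> m <= b).

Definition between_copulas (Cl Cu : R -> R -> R) (C : R -> R -> R) : Prop :=
  is_copula C /\
  (forall u v, in01 u -> in01 v -> Cl u v <= C u v /\ C u v <= Cu u v).

Definition coherent (Cl Cu : R -> R -> R) : Prop :=
  forall u v, in01 u -> in01 v ->
    is_inf (fun y => exists C, between_copulas Cl Cu C /\ y = C u v) (Cl u v) /\
    is_sup (fun y => exists C, between_copulas Cl Cu C /\ y = C u v) (Cu u v).

From Stdlib Require Import Reals Lra Psatz.
From Coquelicot Require Import Rcomplements.
Open Scope R_scope.

(* Write C(u,w) = u - max(0, u P - φ(u) Q) with P = 1 - χ(w), Q = w - χ(w).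
   Then the boundary conditions are immediate, and C^MM_{φl,χu} <= C^MM_{φu,χl}
   because C^MM grows with φ and decreases with χ.  For v1 <= v2 and k = φ(u)/u,
   the C-volume of [u1,u2] x [v1,v2] is u2 g(k2) - u1 g(k1), where
   g(k) = max(0, P1 - k Q1) - max(0, P2 - k Q2).  (F2) and (F3) give
   u1 <= u2, k2 <= k1, u1 k1 <= u2 k2 as well as P2 <= P1 and P2 Q1 <= P1 Q2.
   Under these conditions g is nonnegative, and between k2 and k1 it is either
   non-increasing or bounded by its affine branch, which is exact at k2; either
   way the volume is nonnegative.  Finally, any two pointwise ordered copulas form a coherent
   imprecise copula, since the bounds themselves attain the inf and the sup. *)

Section RampGap.

Variables P1 Q1 P2 Q2 : R.
Hypotheses (P2_le_P1 : P2 <= P1) (Q1_ge0 : 0 <= Q1) (Q2_ge0 : 0 <= Q2)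
  (cross : P2 * Q1 <= P1 * Q2).

Definition ramp_gap (k : R) : R := Rmax 0 (P1 - k * Q1) - Rmax 0 (P2 - k * Q2).

Lemma ramp_cross k : 0 <= k -> Q1 * (P2 - k * Q2) <= Q2 * (P1 - k * Q1).
Proof. intros hk. nra. Qed.

Lemma ramp_pos_le k : 0 <= k -> 0 < P2 - k * Q2 -> 0 <= P1 - k * Q1.
Proof.
intros hk hpos. apply Rnot_lt_le. intros hneg.
assert (0 < Q1) by nra.
assert (0 < Q1 * (P2 - k * Q2)) by (apply Rmult_lt_0_compat; lra).
assert (Q2 * (P1 - k * Q1) <= 0) by nra.
pose proof (ramp_cross k hk). lra.
Qed.

Lemma ramp_gap_ge0 k : 0 <= k -> 0 <= ramp_gap k.
Proof.
intros hk. pose proof (ramp_pos_le k hk). pose proof (ramp_cross k hk).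
unfold ramp_gap, Rmax.
destruct (Rle_dec 0 (P1 - k * Q1)); destruct (Rle_dec 0 (P2 - k * Q2)); try lra.
destruct (Rle_dec Q1 Q2).
- assert (0 <= k * (Q2 - Q1)) by (apply Rmult_le_pos; lra). lra.
- assert (0 <= (Q1 - Q2) * (P1 - k * Q1)) by (apply Rmult_le_pos; lra). nra.
Qed.

Lemma ramp_gap_antitone k1 k2 : 0 <= k2 -> k2 <= k1 ->
  Q2 <= Q1 \/ P2 < k2 * Q2 -> ramp_gap k1 <= ramp_gap k2.
Proof.
intros hk hkk hcase. pose proof (ramp_pos_le k1). pose proof (ramp_pos_le k2 hk).
pose proof (ramp_gap_ge0 k2 hk). unfold ramp_gap, Rmax in *.
destruct (Rle_dec 0 (P1 - k1 * Q1)); destruct (Rle_dec 0 (P2 - k1 * Q2));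
destruct (Rle_dec 0 (P1 - k2 * Q1)); destruct (Rle_dec 0 (P2 - k2 * Q2)); nra.
Qed.

Lemma ramp_gap_le_affine k : Q1 <= Q2 -> 0 <= k ->
  ramp_gap k <= (P1 - P2) + k * (Q2 - Q1).
Proof.
intros hq hk. pose proof (ramp_pos_le k hk).
unfold ramp_gap, Rmax.
destruct (Rle_dec 0 (P1 - k * Q1)); destruct (Rle_dec 0 (P2 - k * Q2)); nra.
Qed.

Lemma ramp_gap_affine k : 0 < Q2 -> 0 <= k -> k * Q2 <= P2 ->
  ramp_gap k = (P1 - P2) + k * (Q2 - Q1).
Proof.
intros hQ2 hk hthr. pose proof (ramp_cross k hk).
assert (0 <= P1 - k * Q1).
{ apply (Rmult_le_reg_l Q2); [lra|].
  assert (0 <= Q1 * (P2 - k * Q2)) by (apply Rmult_le_pos; lra). lra. }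
unfold ramp_gap. rewrite !Rmax_right by lra. ring.
Qed.

Lemma scaled_ramp_gap_le x1 k1 x2 k2 :
  0 <= x1 -> x1 <= x2 -> 0 <= k2 -> k2 <= k1 -> x1 * k1 <= x2 * k2 ->
  x1 * ramp_gap k1 <= x2 * ramp_gap k2.
Proof.
intros hx1 hx hk2 hk hxk.
pose proof (ramp_gap_ge0 k1 ltac:(lra)). pose proof (ramp_gap_ge0 k2 hk2).
destruct (Rle_dec Q2 Q1) as [hq|hq]; [|destruct (Rlt_dec P2 (k2 * Q2)) as [hthr|hthr]].
- pose proof (ramp_gap_antitone k1 k2 hk2 hk (or_introl hq)). nra.
- pose proof (ramp_gap_antitone k1 k2 hk2 hk (or_intror hthr)). nra.
- rewrite (ramp_gap_affine k2 ltac:(lra) hk2 ltac:(lra)).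
  pose proof (ramp_gap_le_affine k1 ltac:(lra) ltac:(lra)). nra.
Qed.

(* The homogeneous form u * ramp_gap (p / u), meaningful also at u = 0. *)
Definition ramp_gap_at (u p : R) : R :=
  Rmax 0 (u * P1 - p * Q1) - Rmax 0 (u * P2 - p * Q2).

Lemma ramp_gap_at_scale u p : 0 < u -> ramp_gap_at u p = u * ramp_gap (p / u).
Proof.
intros hu. unfold ramp_gap_at, ramp_gap.
rewrite Rmult_minus_distr_l, <- !RmaxRmult, Rmult_0_r by lra.
replace (u * (P1 - p / u * Q1)) with (u * P1 - p * Q1) by (field; lra).
replace (u * (P2 - p / u * Q2)) with (u * P2 - p * Q2) by (field; lra).
reflexivity.
Qed.

Lemma ramp_gap_at_le u1 p1 u2 p2 :
  0 <= u1 -> u1 <= u2 -> 0 <= p1 -> p1 <= p2 -> p2 * u1 <= p1 * u2 ->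
  ramp_gap_at u1 p1 <= ramp_gap_at u2 p2.
Proof.
intros hu1 hu hp1 hp hcross.
destruct (Rle_lt_or_eq_dec 0 u1 hu1) as [pos1|<-].
- rewrite !ramp_gap_at_scale by lra.
  apply scaled_ramp_gap_le; try lra.
  + apply Rdiv_le_0_compat; lra.
  + apply (Rmult_le_reg_r (u1 * u2)); [nra|].
    replace (p2 / u2 * (u1 * u2)) with (p2 * u1) by (field; lra).
    replace (p1 / u1 * (u1 * u2)) with (p1 * u2) by (field; lra). lra.
  + replace (u1 * (p1 / u1)) with p1 by (field; lra).
    replace (u2 * (p2 / u2)) with p2 by (field; lra). lra.
- replace (ramp_gap_at 0 p1) with 0
    by (unfold ramp_gap_at; rewrite !Rmax_left by nra; ring).
  destruct (Rle_lt_or_eq_dec 0 u2 hu) as [pos2|<-].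
  + rewrite ramp_gap_at_scale by lra.
    apply Rmult_le_pos; [lra|apply ramp_gap_ge0, Rdiv_le_0_compat; lra].
  + unfold ramp_gap_at. rewrite !Rmax_left by nra. lra.
Qed.

End RampGap.

Lemma id_le_phi phi chi u : admissible phi chi -> in01 u -> u <= phi u.
Proof.
intros [_ [_ [[phi0 [_ [phi1 _]]] [_ [phi_ratio _]]]]] [hu0 hu1].
destruct (Rle_lt_or_eq_dec 0 u hu0) as [pos|<-]; [|lra].
pose proof (phi_ratio u 1 pos hu1 (Rle_refl 1)) as h.
rewrite phi1, Rdiv_1_r in h.
apply (Rmult_le_compat_r u) in h; [|lra].
replace (phi u / u * u) with (phi u) in h by (field; lra). lra.
Qed.

Lemma chi_le_id chi phi w : admissible phi chi -> in01 w -> chi w <= w.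
Proof.
intros [_ [chi01 [[_ [_ [_ chi1]]] [_ [_ [chi_ratio_ge1 _]]]]]] [hw0 hw1].
destruct (Rle_lt_or_eq_dec w 1 hw1) as [lt1| ->]; [|lra].
pose proof (chi_ratio_ge1 w (conj hw0 lt1)) as h. unfold chi_ratio in h.
destruct (Req_EM_T (w - chi w) 0); [lra|]. simpl in h.
apply Rnot_lt_le. intros hlt.
assert (chi w <= 1) by (apply chi01; split; lra).
assert (/ (w - chi w) < 0) by (apply Rinv_lt_0_compat; lra).
unfold Rdiv in h. nra.
Qed.

Lemma phi_cross phi chi u1 u2 : admissible phi chi ->
  0 <= u1 -> u1 <= u2 -> u2 <= 1 -> phi u2 * u1 <= phi u1 * u2.
Proof.
intros [_ [_ [[phi0 _] [_ [phi_ratio _]]]]] hu1 hu hu2.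
destruct (Rle_lt_or_eq_dec 0 u1 hu1) as [pos|<-].
- pose proof (phi_ratio u1 u2 pos hu hu2) as h.
  apply (Rmult_le_compat_r (u1 * u2)) in h; [|nra].
  replace (phi u2 / u2 * (u1 * u2)) with (phi u2 * u1) in h by (field; lra).
  replace (phi u1 / u1 * (u1 * u2)) with (phi u1 * u2) in h by (field; lra).
  exact h.
- rewrite phi0. lra.
Qed.

Lemma chi_cross phi chi w1 w2 : admissible phi chi ->
  0 <= w1 -> w1 <= w2 -> w2 <= 1 ->
  (1 - chi w2) * (w1 - chi w1) <= (1 - chi w1) * (w2 - chi w2).
Proof.
intros hA hw1 hw hw2.
pose proof (chi_le_id _ _ w1 hA (conj hw1 (Rle_trans _ _ _ hw hw2))).
pose proof (chi_le_id _ _ w2 hA (conj (Rle_trans _ _ _ hw1 hw) hw2)).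
destruct hA as [_ [chi01 [[_ [_ [_ chi1]]] [[_ chi_mono] [_ [_ chi_ratio_anti]]]]]].
assert (chi w1 <= 1) by (apply chi01; split; lra).
destruct (Rle_lt_or_eq_dec w2 1 hw2) as [lt1| ->]; [|rewrite chi1; lra].
pose proof (chi_ratio_anti w1 w2 hw1 hw lt1) as h. unfold chi_ratio in h.
destruct (Req_EM_T (w2 - chi w2) 0) as [e2|e2];
  destruct (Req_EM_T (w1 - chi w1) 0) as [e1|e1]; simpl in h.
- rewrite e1, e2. lra.
- contradiction.
- rewrite e1. nra.
- apply (Rmult_le_compat_r ((w1 - chi w1) * (w2 - chi w2))) in h; [|nra].
  replace ((1 - chi w2) / (w2 - chi w2) * ((w1 - chi w1) * (w2 - chi w2)))
    with ((1 - chi w2) * (w1 - chi w1)) in h by (field; lra).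
  replace ((1 - chi w1) / (w1 - chi w1) * ((w1 - chi w1) * (w2 - chi w2)))
    with ((1 - chi w1) * (w2 - chi w2)) in h by (field; lra).
  exact h.
Qed.

Lemma CMM_ramp phi chi u w :
  CMM phi chi u w = u - Rmax 0 (u * (1 - chi w) - phi u * (w - chi w)).
Proof.
unfold CMM, Rmin, Rmax.
destruct (Rle_dec (u * (1 - w)) ((phi u - u) * (w - chi w)));
destruct (Rle_dec 0 (u * (1 - chi w) - phi u * (w - chi w))); lra.
Qed.

Lemma CMM_boundary phi chi : admissible phi chi -> copula_boundary (CMM phi chi).
Proof.
intros hA. split.
- intros u w hu hw. pose proof (id_le_phi _ _ u hA hu). pose proof (chi_le_id _ _ w hA hw).
  destruct hu, hw. split.
  + unfold CMM. apply Rmin_case; nra.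
  + rewrite CMM_ramp. pose proof (Rmax_l 0 (u * (1 - chi w) - phi u * (w - chi w))). lra.
- destruct hA as [_ [_ [[phi0 [chi0 [phi1 chi1]]] _]]].
  intros u [hu0 hu1]. unfold CMM. rewrite phi0, chi0, phi1, chi1.
  repeat split; apply Rmin_case_strong; nra.
Qed.

Lemma CMM_is_copula phi chi : admissible phi chi -> is_copula (CMM phi chi).
Proof.
intros hA. split; [exact (CMM_boundary _ _ hA)|].
intros u1 u2 v1 v2 hu1 hu2 hv1 hv2 hu hv.
pose proof (chi_le_id _ _ v1 hA hv1). pose proof (chi_le_id _ _ v2 hA hv2).
pose proof (chi_cross _ _ v1 v2 hA (proj1 hv1) hv (proj2 hv2)).
pose proof (phi_cross _ _ u1 u2 hA (proj1 hu1) hu (proj2 hu2)).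
destruct hA as [phi01 [_ [_ [[phi_mono chi_mono] _]]]].
assert (chi v1 <= chi v2) by (apply chi_mono; auto).
assert (0 <= phi u1) by (apply phi01; auto).
assert (phi u1 <= phi u2) by (apply phi_mono; auto).
pose proof (ramp_gap_at_le (1 - chi v1) (v1 - chi v1) (1 - chi v2) (v2 - chi v2)
  ltac:(lra) ltac:(lra) ltac:(lra) ltac:(lra)
  u1 (phi u1) u2 (phi u2) (proj1 hu1) hu ltac:(lra) ltac:(lra) ltac:(lra)) as h.
unfold ramp_gap_at in h. rewrite !CMM_ramp. lra.
Qed.

Lemma CMM_le phil phiu chil chiu u w :
  admissible phil chiu ->
  (forall x, in01 x -> phil x <= phiu x) ->
  (forall x, in01 x -> chil x <= chiu x) -> in01 u -> in01 w ->
  CMM phil chiu u w <= CMM phiu chil u w.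
Proof.
intros hA hphi hchi hu hw.
pose proof (id_le_phi _ _ u hA hu). pose proof (chi_le_id _ _ w hA hw).
pose proof (hphi u hu). pose proof (hchi w hw).
unfold CMM. apply Rplus_le_compat_l, Rle_min_compat_l. nra.
Qed.

Section OrderedCopulas.

Variables Cl Cu : R -> R -> R.
Hypotheses (Cl_copula : is_copula Cl) (Cu_copula : is_copula Cu)
  (Cl_le_Cu : forall u v, in01 u -> in01 v -> Cl u v <= Cu u v).

Lemma ordered_copulas_imprecise : is_imprecise_copula Cl Cu.
Proof.
destruct Cl_copula as [bl vol_l], Cu_copula as [bu vol_u].
split; [exact bl|split; [exact bu|]].
intros u1 u2 v1 v2 hu1 hu2 hv1 hv2 hu hv.
pose proof (vol_l u1 u2 v1 v2 hu1 hu2 hv1 hv2 hu hv).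
pose proof (vol_u u1 u2 v1 v2 hu1 hu2 hv1 hv2 hu hv).
pose proof (Cl_le_Cu u1 v1 hu1 hv1). pose proof (Cl_le_Cu u2 v2 hu2 hv2).
pose proof (Cl_le_Cu u1 v2 hu1 hv2). pose proof (Cl_le_Cu u2 v1 hu2 hv1).
lra.
Qed.

Lemma ordered_copulas_coherent : coherent Cl Cu.
Proof.
intros u v hu hv. split; split.
- intros y [C [[_ hC] ->]]. apply (hC u v hu hv).
- intros b hb. apply hb. exists Cl. split; [|reflexivity].
  split; [exact Cl_copula|]. intros; split; [lra|auto].
- intros y [C [[_ hC] ->]]. apply (hC u v hu hv).
- intros b hb. apply hb. exists Cu. split; [|reflexivity].
  split; [exact Cu_copula|]. intros; split; [auto|lra].
Qed.

End OrderedCopulas.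

Theorem corollary3 (phil phiu chil chiu : R -> R) :
  admissible phil chil -> admissible phil chiu ->
  admissible phiu chil -> admissible phiu chiu ->
  (forall x, in01 x -> phil x <= phiu x) ->
  (forall x, in01 x -> chil x <= chiu x) ->
  is_imprecise_copula (CMM phil chiu) (CMM phiu chil) /\
  coherent (CMM phil chiu) (CMM phiu chil).
Proof.
intros _ hlu hul _ hphi hchi.
pose proof (CMM_is_copula _ _ hlu) as lower_copula.
pose proof (CMM_is_copula _ _ hul) as upper_copula.
assert (lower_le_upper : forall u v, in01 u -> in01 v ->
  CMM phil chiu u v <= CMM phiu chil u v) by (intros; apply CMM_le; auto).
split.
- exact (ordered_copulas_imprecise _ _ lower_copula upper_copula lower_le_upper).
- exact (ordered_copulas_coherent _ _ lower_copula upper_copula lower_le_upper).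
Qed.
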